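(* Let $\lambda\in\mathbb N$ and $N=n+m$ with $n,m\in\mathbb N$. Then $$S_N(\lambda)=(-1)^{\lambda\frac{N(N-1)}{2}}\sum_{\substack{I_{kl}=-\lambda\\ 1\le k<l\le N}}^{\lambda}(-1)^{\sum_{k<l}I_{kl}}\prod_{1\le k<l\le N}\binom{2\lambda}{\lambda+I_{kl}}\prod_{k=1}^N\frac{1}{1+(N-1)\lambda+\sum_{l\ne k}I_{kl}},$$ $$S_{n,m}(\lambda)=(-1)^{\lambda(n(n-1)+m(m-1))/2}\sum_{\substack{I_{kl}=-\lambda\\ 1\le k<l\le N}}^{\lambda}(-1)^{\sum_{k<l}s_{kl}I_{kl}}\prod_{1\le k<l\le N}\binom{2\lambda}{\lambda+I_{kl}}\prod_{k=1}^N\frac{1}{1+(N-1)\lambda+\sum_{l\ne k}I_{kl}}.$$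
   Context: Define $$S_N(\lambda)=\int_{[0,1]^N}\prod_{1\le k<l\le N}|y_k-y_l|^{2\lambda}\,dy,$$ $$S_{n,m}(\lambda)=\int_{[0,1]^N}\prod_{1\le k<l\le n}|y_k-y_l|^{2\lambda}\prod_{\substack{k=1,\dots,n\\ l=n+1,\dots,N}}|y_k+y_l|^{2\lambda}\prod_{n+1\le k<l\le N}|y_k-y_l|^{2\lambda}\,dy.$$ The sums run over all families of integers $I_{kl}\in\{-\lambda,\dots,\lambda\}$, one for each pair $1\le k<l\le N$, and $I_{kl}:=-I_{lk}$ for $k>l$. For $k<l$, $s_{kl}=1$ if the factor for the pair $(k,l)$ in the integrand of $S_{n,m}$ is $|y_k-y_l|^{2\lambda}$ (i.e. $k,l$ both in $\{1,\dots,n\}$ or both in $\{n+1,\dots,N\}$), and $s_{kl}=0$ if it is $|y_k+y_l|^{2\lambda}$. *)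

From HB Require Import structures.
From mathcomp Require Import all_boot all_order all_algebra.
From mathcomp Require Import all_classical all_reals all_analysis.
Set Implicit Arguments. Unset Strict Implicit. Unset Printing Implicit Defensive.
Import Order.TTheory GRing.Theory Num.Theory.
Local Open Scope ring_scope.
Local Open Scope ereal_scope.

Definition vcons (R : Type) (N : nat) (x : R) (y : 'I_N -> R) : 'I_N.+1 -> R :=
  fun i => match unlift ord0 i with None => x | Some j => y j end.

Fixpoint cube_int (R : realType) (N : nat) : (('I_N -> R) -> \bar R) -> \bar R :=
  match N with
  | 0 => fun F => F (fun _ => 0%R)
  | N'.+1 => fun F =>
      \int[@lebesgue_measure R]_(x in `[0%R, 1%R]) cube_int (fun y => F (vcons x y))
  end.

Local Close Scope ereal_scope.

Definition S_N (R : realType) (lam N : nat) : \bar R :=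
  cube_int (fun y : 'I_N -> R =>
    (\prod_(k < N) \prod_(l < N | (k < l)%N) `|y k - y l| ^+ (2 * lam))%:E).

(* same side of the split {1..n} | {n+1..n+m} : s_kl = 1 *)
Definition same_side (n m : nat) (k l : 'I_(n + m)) : bool := (k < n)%N == (l < n)%N.

Definition S_nm (R : realType) (lam n m : nat) : \bar R :=
  cube_int (fun y : 'I_(n + m) -> R =>
    (\prod_(k < n + m) \prod_(l < n + m | (k < l)%N)
       (if same_side k l then `|y k - y l| else `|y k + y l|) ^+ (2 * lam))%:E).

Notation pairs N := {p : 'I_N * 'I_N | (p.1 < p.2)%N}.

(* A family (I_kl)_{k<l} with I_kl in {-lam..lam} is encoded by
   J : {ffun pairs N -> 'I_(2 lam + 1)} with I_kl = J(k,l) - lam;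
   Ival extends it with I_lk = - I_kl (and 0 on the diagonal, never used). *)
Definition Ival (lam N : nat) (J : {ffun pairs N -> 'I_(2 * lam).+1}) (k l : 'I_N) : int :=
  match @insub _ _ (pairs N) (k, l) with
  | Some p => (J p : nat)%:Z - lam%:Z
  | None => match @insub _ _ (pairs N) (l, k) with
            | Some p => lam%:Z - (J p : nat)%:Z
            | None => 0
            end
  end.

Definition Isum (R : realType) (lam N : nat) (s : 'I_N -> 'I_N -> bool) : R :=
  \sum_(J : {ffun pairs N -> 'I_(2 * lam).+1})
    (-1) ^ (\sum_(k < N) \sum_(l < N | (k < l)%N) (s k l)%:Z * Ival J k l)
    * (\prod_(k < N) \prod_(l < N | (k < l)%N) ('C(2 * lam, absz (lam%:Z + Ival J k l)%R))%:R)
    * \prod_(k < N)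
        (((1 + (N - 1) * lam)%N%:Z + \sum_(l < N | l != k) Ival J k l)%:~R)^-1.

(** Since the exponent 2 lam is even, every factor is a polynomial,
    |y_k -+ y_l|^(2 lam) = (y_k -+ y_l)^(2 lam); expand it by the binomial
    theorem, indexing its terms by I_kl so that y_k is raised to lam + I_kl
    and y_l to lam - I_kl = lam + I_lk.
    Distributing the product over the pairs turns the integrand into a sum over
    the families (I_kl) of monomials prod_k y_k^((N-1) lam + sum_(l<>k) I_kl),
    and such a monomial integrates over [0,1]^N to
    prod_k 1 / (1 + (N-1) lam + sum_(l<>k) I_kl).  For a difference, the sign
    (-1)^(lam - I_kl) = (-1)^lam (-1)^(I_kl) leaves a global factor (-1)^lam
    for every pair with s_kl = 1: there are N(N-1)/2 such pairs for S_N, and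
    n(n-1)/2 + m(m-1)/2 of them for S_{n,m}. *)

From HB Require Import structures.
From mathcomp Require Import all_boot all_order all_algebra.
From mathcomp Require Import all_classical all_reals all_analysis.
From mathcomp Require Import ring zify.
Set Implicit Arguments. Unset Strict Implicit. Unset Printing Implicit Defensive.
Import numFieldNormedType.Exports.
Import Order.TTheory GRing.Theory Num.Theory.
Local Open Scope ring_scope.

Lemma integral01_sum_monomials (R : realType) (T : finType) (c : T -> R) (a : T -> nat) :
  (\int[@lebesgue_measure R]_(x in `[0%R, 1%R]) (\sum_t c t * x ^+ a t)%:E)%E
  = (\sum_t c t / (a t).+1%:R)%:E.
Proof.
pose P : {poly R} := \sum_t (c t / (a t).+1%:R) *: 'X^((a t).+1).
have P'E x : (P^`()).[x] = \sum_t c t * x ^+ a t.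
  rewrite /P raddf_sum horner_sum; apply: eq_bigr => t _.
  rewrite /= derivZ derivXn hornerZ hornerMn hornerXn -mulr_natr.
  by field; rewrite addrC natr1 pnatr_eq0.
have -> : (fun x => (\sum_t c t * x ^+ a t)%:E) = (fun x => (P^`()).[x]%:E).
  by apply/funext => x; rewrite P'E.
rewrite (@continuous_FTC2 R (horner P^`()) (horner P)) //.
- rewrite -EFinD /P !horner_sum -sumrB; congr EFin; apply: eq_bigr => t _.
  by rewrite !hornerZ !hornerXn expr1n expr0n mulr0 subr0 mulr1.
- by apply: continuous_subspaceT; exact: continuous_horner.
- split; first by move=> x _; exact: derivable_horner.
  + by apply: cvg_at_right_filter; exact: continuous_horner.
  + by apply: cvg_at_left_filter; exact: continuous_horner.
- by move=> x _; rewrite derivE.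
Qed.

Lemma vcons0 (T : Type) N (x : T) (y : 'I_N -> T) : vcons x y ord0 = x.
Proof. by rewrite /vcons unlift_none. Qed.

Lemma vconsS (T : Type) N (x : T) (y : 'I_N -> T) i : vcons x y (lift ord0 i) = y i.
Proof. by rewrite /vcons liftK. Qed.

Lemma cube_int_sum_monomials (R : realType) N (T : finType) (c : T -> R)
    (e : T -> 'I_N -> nat) :
  cube_int (fun y : 'I_N -> R => (\sum_t c t * \prod_k y k ^+ e t k)%:E)
  = (\sum_t c t * \prod_k ((e t k).+1%:R)^-1)%:E.
Proof.
elim: N c e => [|N IH] c e /=.
  by congr EFin; apply: eq_bigr => t _; rewrite !big_ord0.
have -> : (fun x => cube_int (fun y => (\sum_t c t * \prod_k vcons x y k ^+ e t k)%:E))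
  = fun x => (\sum_t (c t * \prod_(k < N) ((e t (lift ord0 k)).+1%:R)^-1)
                     * x ^+ e t ord0)%:E.
  apply/funext => x; transitivity (cube_int (fun y : 'I_N -> R =>
    (\sum_t (c t * x ^+ e t ord0) * \prod_k y k ^+ e t (lift ord0 k))%:E)).
    congr cube_int; apply/funext => y; congr EFin; apply: eq_bigr => t _.
    rewrite big_ord_recl vcons0 mulrA; congr (_ * _).
    by apply: eq_bigr => i _; rewrite vconsS.
  by rewrite IH; congr EFin; apply: eq_bigr => t _; rewrite mulrAC.
rewrite integral01_sum_monomials; congr EFin; apply: eq_bigr => t _.
by rewrite big_ord_recl mulrAC mulrA.
Qed.

Section FamilyEntries.
Variables (lam N : nat) (J : {ffun pairs N -> 'I_(2 * lam).+1}).

(* The exponent lam + I_kl of y_k in the binomial term chosen by J for the pair {k, l}. *)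
Definition Iexp (k l : 'I_N) : nat := absz (lam%:Z + Ival J k l).

Lemma Ival_pair (p : pairs N) : Ival J (val p).1 (val p).2 = (J p : nat)%:Z - lam%:Z.
Proof.
rewrite /Ival -surjective_pairing; case: insubP => [q _ /val_inj -> // |].
by rewrite (valP p).
Qed.

Lemma IvalN (k l : 'I_N) : Ival J l k = - Ival J k l.
Proof.
rewrite /Ival.
case: (insubP (pairs N) (l, k)) => [p lk _ | _];
case: (insubP (pairs N) (k, l)) => [q kl _ | _] //=; rewrite ?opprB //.
by have := ltn_trans lk kl; rewrite ltnn.
Qed.

Lemma IexpE (k l : 'I_N) : (Iexp k l)%:Z = lam%:Z + Ival J k l.
Proof.
apply: gez0_abs; rewrite /Ival.
case: insubP => [p _ _ | _]; first by rewrite addrC subrK.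
case: insubP => [p _ _ | _]; last by rewrite addr0.
have := ltn_ord (J p); rewrite ltnS => Jp_le.
by rewrite addrA -PoszD subr_ge0 lez_nat; lia.
Qed.

Lemma Iexp_pair (p : pairs N) : Iexp (val p).1 (val p).2 = J p.
Proof. by apply/eqP; rewrite -eqz_nat IexpE Ival_pair addrC subrK. Qed.

Lemma Iexp_pair_swap (p : pairs N) : Iexp (val p).2 (val p).1 = (2 * lam - J p)%N.
Proof.
have Jp_le : (J p <= 2 * lam)%N by rewrite -ltnS.
apply/eqP; rewrite -eqz_nat IexpE IvalN Ival_pair opprB addrA -PoszD addnn -mul2n.
by rewrite subzn.
Qed.

Lemma Iexp_sum (k : 'I_N) :
  ((\sum_(l < N | l != k) Iexp k l).+1)%:Z
  = (1 + (N - 1) * lam)%N%:Z + \sum_(l < N | l != k) Ival J k l.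
Proof.
rewrite -addn1 addnC PoszD (big_morph Posz PoszD erefl).
under eq_bigr do rewrite IexpE.
rewrite big_split /= sumr_const cardC1 card_ord subn1 addrA.
by rewrite -mulr_natl natz -PoszM -PoszD.
Qed.

End FamilyEntries.

Lemma big_pairs (R : Type) (idx : R) (op : Monoid.com_law idx) N
    (F : 'I_N -> 'I_N -> R) :
  \big[op/idx]_(p : pairs N) F (val p).1 (val p).2
  = \big[op/idx]_(k < N) \big[op/idx]_(l < N | (k < l)%N) F k l.
Proof. by rewrite pair_big_dep (big_sub (fun p : 'I_N * 'I_N => (p.1 < p.2)%N)). Qed.

Lemma prod_neq_pairs (R : comPzSemiRingType) N (G : 'I_N -> 'I_N -> R) :
  \prod_(k < N) \prod_(l < N | l != k) G k l
  = \prod_(k < N) \prod_(l < N | (k < l)%N) G k l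
    * \prod_(k < N) \prod_(l < N | (k < l)%N) G l k.
Proof.
have -> : \prod_(k < N) \prod_(l < N | (k < l)%N) G l k
          = \prod_(k < N) \prod_(l < N | (l < k)%N) G k l.
  rewrite (eq_bigr _ (fun k _ => big_mkcond _ _)) exchange_big /=.
  by apply: eq_bigr => k _; rewrite [RHS]big_mkcond.
rewrite -big_split; apply: eq_bigr => k _ /=.
rewrite (bigID (fun l : 'I_N => (k < l)%N)) /=.
by congr (_ * _); apply: eq_bigl => l; rewrite -(inj_eq val_inj) /=; lia.
Qed.

Lemma abs_pm_exprDn (R : realDomainType) (b : bool) (u v : R) lam :
  (if b then `|u - v| else `|u + v|) ^+ (2 * lam)
  = \sum_(j < (2 * lam).+1) 'C(2 * lam, j)%:R
      * (if b then (-1) ^+ (2 * lam - j) else 1) * (u ^+ j * v ^+ (2 * lam - j)).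
Proof.
have absX2 x : `|x| ^+ (2 * lam) = x ^+ (2 * lam) :> R.
  by rewrite !exprM real_normK ?num_real.
case: b; rewrite absX2 addrC exprDn; apply: eq_bigr => j _.
  by rewrite [(- v) ^+ _]exprNn -mulr_natl; ring.
by rewrite -mulr_natl; ring.
Qed.

Lemma sign_binomial_shift (R : fieldType) lam j (b : bool) : (j <= 2 * lam)%N ->
  (if b then (-1) ^+ (2 * lam - j) else 1 : R)
  = (-1) ^+ (lam * b) * (-1) ^ ((b : nat)%:Z * (j%:Z - lam%:Z)).
Proof.
move=> j_le; case: b => /=; last by rewrite muln0 mul0r expr0z mulr1.
have N1_neq0 : (-1 : R) != 0 by rewrite oppr_eq0 oner_eq0.
rewrite muln1 mul1r expfzDr // -exprnN /= mulrCA mulfV ?signr_eq0 // mulr1.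
by rewrite -signr_odd oddN ?signr_odd // oddM.
Qed.

Lemma card_pairs N : (\sum_(k < N) \sum_(l < N | k < l) 1 = 'C(N, 2))%N.
Proof.
elim: N => [|N IH]; first by rewrite big_ord0.
rewrite big_ord_recr /= [X in (_ + X)%N]big_pred0 => [|l]; last first.
  by rewrite ltnNge -ltnS ltn_ord.
rewrite addn0 (eq_bigr (fun k : 'I_N => \sum_(l < N | k < l) 1 + 1)%N) => [|k _].
  by rewrite big_split /= IH sum1_card card_ord binS bin1.
by rewrite big_mkcond big_ord_recr /= -big_mkcond /= ltn_ord.
Qed.

Lemma count_same_side n m :
  (\sum_(k < n + m) \sum_(l < n + m | k < l) same_side k l = 'C(n, 2) + 'C(m, 2))%N.
Proof.
rewrite big_split_ord /= -card_pairs -[in RHS]card_pairs.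
congr (_ + _); apply: eq_bigr => k _; rewrite big_split_ord /=.
  rewrite [X in (_ + X)%N]big1 ?addn0 => [|i _]; last first.
    by rewrite /same_side /= ltn_ord ltnNge leq_addr.
  by apply: eq_bigr => i _; rewrite /same_side /= !ltn_ord.
rewrite big1 /= => [|i _]; last by rewrite /same_side /= ltn_ord ltnNge leq_addr.
apply: eq_big => [i | i _]; first by rewrite ltn_add2l.
by rewrite /same_side /= !ltnNge !leq_addr.
Qed.

Section Expansion.
Variables (R : realFieldType) (lam N : nat) (s : 'I_N -> 'I_N -> bool).

Lemma prod_pairs_family_term (J : {ffun pairs N -> 'I_(2 * lam).+1}) (y : 'I_N -> R) :
  \prod_(p : pairs N) ('C(2 * lam, J p)%:R
      * (if s (val p).1 (val p).2 then (-1) ^+ (2 * lam - J p) else 1)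
      * (y (val p).1 ^+ J p * y (val p).2 ^+ (2 * lam - J p)))
  = (-1) ^+ (lam * \sum_(k < N) \sum_(l < N | (k < l)%N) s k l)
    * ((-1) ^ (\sum_(k < N) \sum_(l < N | (k < l)%N) (s k l)%:Z * Ival J k l)
       * \prod_(k < N) \prod_(l < N | (k < l)%N) 'C(2 * lam, Iexp J k l)%:R)
    * \prod_(k < N) y k ^+ (\sum_(l < N | l != k) Iexp J k l).
Proof.
have N1_neq0 : (-1 : R) != 0 by rewrite oppr_eq0 oner_eq0.
have signz_sum := big_morph (fun z : int => (-1 : R) ^ z)
  (fun a b => expfzDr a b N1_neq0) (expr0z _).
have sign_nat : \prod_(k < N) \prod_(l < N | (k < l)%N) (-1) ^+ (lam * s k l)
    = (-1) ^+ (lam * \sum_(k < N) \sum_(l < N | (k < l)%N) s k l) :> R.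
  under eq_bigr do rewrite prodrXr.
  rewrite prodrXr; congr (_ ^+ _); rewrite big_distrr; apply: eq_bigr => k _.
  by rewrite big_distrr.
have sign_int : \prod_(k < N) \prod_(l < N | (k < l)%N) (-1) ^ ((s k l)%:Z * Ival J k l)
    = (-1) ^ (\sum_(k < N) \sum_(l < N | (k < l)%N) (s k l)%:Z * Ival J k l) :> R.
  by rewrite signz_sum; apply: eq_bigr => k _; rewrite signz_sum.
have monomial : \prod_(k < N) \prod_(l < N | (k < l)%N) y k ^+ Iexp J k l
      * \prod_(k < N) \prod_(l < N | (k < l)%N) y l ^+ Iexp J l k
    = \prod_(k < N) y k ^+ (\sum_(l < N | l != k) Iexp J k l).
  by rewrite -prod_neq_pairs; apply: eq_bigr => k _; rewrite prodrXr.
pose T k l := 'C(2 * lam, Iexp J k l)%:R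
  * ((-1) ^+ (lam * s k l) * (-1) ^ ((s k l)%:Z * Ival J k l))
  * (y k ^+ Iexp J k l * y l ^+ Iexp J l k).
rewrite (eq_bigr (fun p => T (val p).1 (val p).2)) => [|p _]; last first.
  rewrite /T Iexp_pair Iexp_pair_swap Ival_pair -sign_binomial_shift //.
  by rewrite -ltnS.
rewrite big_pairs /T.
under eq_bigr do rewrite !big_split /=.
rewrite !big_split /= sign_nat sign_int monomial; congr (_ * _).
by rewrite mulrC -mulrA.
Qed.

Lemma prod_abs_pm_expansion (y : 'I_N -> R) :
  \prod_(k < N) \prod_(l < N | (k < l)%N)
     (if s k l then `|y k - y l| else `|y k + y l|) ^+ (2 * lam)
  = \sum_(J : {ffun pairs N -> 'I_(2 * lam).+1})
      (-1) ^+ (lam * \sum_(k < N) \sum_(l < N | (k < l)%N) s k l)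
      * ((-1) ^ (\sum_(k < N) \sum_(l < N | (k < l)%N) (s k l)%:Z * Ival J k l)
         * \prod_(k < N) \prod_(l < N | (k < l)%N) 'C(2 * lam, Iexp J k l)%:R)
      * \prod_(k < N) y k ^+ (\sum_(l < N | l != k) Iexp J k l).
Proof.
under eq_bigr => k _ do under eq_bigr => l _ do rewrite abs_pm_exprDn.
rewrite -(big_pairs _ (fun k l => \sum_(j < (2 * lam).+1) 'C(2 * lam, j)%:R
  * (if s k l then (-1) ^+ (2 * lam - j) else 1) * (y k ^+ j * y l ^+ (2 * lam - j)))).
by rewrite bigA_distr_bigA; apply: eq_bigr => J _; rewrite prod_pairs_family_term.
Qed.

End Expansion.

Lemma cube_int_prod_abs_pm (R : realType) lam N (s : 'I_N -> 'I_N -> bool) :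
  cube_int (fun y : 'I_N -> R => (\prod_(k < N) \prod_(l < N | (k < l)%N)
       (if s k l then `|y k - y l| else `|y k + y l|) ^+ (2 * lam))%:E)
  = ((-1) ^+ (lam * \sum_(k < N) \sum_(l < N | (k < l)%N) s k l) * Isum R lam s)%:E.
Proof.
rewrite (congr1 (@cube_int R N)
  (funext (fun y => congr1 EFin (prod_abs_pm_expansion lam s y)))).
rewrite cube_int_sum_monomials /Isum mulr_sumr; congr EFin; apply: eq_bigr => J _.
rewrite -!mulrA; do 3 congr (_ * _); apply: eq_bigr => k _.
by rewrite -Iexp_sum.
Qed.

Theorem proposition3 (R : realType) (lam n m : nat) :
  S_N R lam (n + m) =
    ((-1) ^+ (lam * ((n + m) * (n + m - 1) %/ 2))
       * Isum R lam (fun _ _ : 'I_(n + m) => true))%:E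
  /\
  S_nm R lam n m =
    ((-1) ^+ (lam * ((n * (n - 1) + m * (m - 1)) %/ 2))
       * Isum R lam (fun k l : 'I_(n + m) => same_side k l))%:E.
Proof.
have mul_pred_bin2 k : (k * (k - 1) = 2 * 'C(k, 2))%N.
  by rewrite subn1 -[k.-1]bin1 mul_bin_diag.
split.
  rewrite mul_pred_bin2 mulKn // -card_pairs.
  exact: (@cube_int_prod_abs_pm R lam (n + m) (fun _ _ => true)).
rewrite !mul_pred_bin2 -mulnDr mulKn // -count_same_side.
exact: (@cube_int_prod_abs_pm R lam (n + m) (@same_side n m)).
Qed.
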